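(* Let $A$ be a unique factorization domain and $R$ a subring of $A$ such that the group of units of $R$ equals that of $A$ and $R_0\cap A=R$, where $R_0$ is the field of fractions of $R$ inside that of $A$. If $R$ is square-factorially closed in $A$, then $R$ is root closed in $A$, i.e. for every $x\in A$ and $n\ge1$, $x^n\in R$ implies $x\in R$.
   Context: An element $a$ of a commutative ring $A$ is square-free if it cannot be written as $a=b^2c$ with $b,c\in A$ and $b$ not a unit; $\operatorname{Sqf}A$ denotes the set of square-free elements. A subring $R$ of a UFD $A$ is square-factorially closed in $A$ if for every $x\in A$ and $y\in\operatorname{Sqf}A$, $x^2y\in R\setminus\{0\}$ implies $x,y\in R$. *)

From HB Require Import structures.
From mathcomp Require Import all_boot all_order all_algebra.
Set Implicit Arguments. Unset Strict Implicit. Unset Printing Implicit Defensive.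
Import Order.TTheory GRing.Theory Num.Theory.
Local Open Scope ring_scope.

Definition associated (A : idomainType) (a b : A) : Prop :=
  exists2 u : A, u \is a GRing.unit & a = u * b.

Definition irreducible_elt (A : idomainType) (a : A) : Prop :=
  [/\ a != 0, a \isn't a GRing.unit &
      forall b c : A, a = b * c -> b \is a GRing.unit \/ c \is a GRing.unit].

Definition UFD (A : idomainType) : Prop :=
  (forall a : A, a != 0 -> a \isn't a GRing.unit ->
     exists s : seq A, (forall p, p \in s -> irreducible_elt p) /\ a = \prod_(p <- s) p)
  /\
  (forall s t : seq A,
     (forall p, p \in s -> irreducible_elt p) ->
     (forall p, p \in t -> irreducible_elt p) ->
     \prod_(p <- s) p = \prod_(p <- t) p ->
     exists t' : seq A, [/\ perm_eq t t', size s = size t' &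
       forall i, (i < size s)%N -> associated (nth 0 s i) (nth 0 t' i)]).

Definition square_free (A : idomainType) (a : A) : Prop :=
  ~ exists b c : A, a = b ^+ 2 * c /\ b \isn't a GRing.unit.

Definition sq_fact_closed (A : idomainType) (S : {pred A}) : Prop :=
  forall x y : A, square_free y -> x ^+ 2 * y \in S -> x ^+ 2 * y != 0 ->
    x \in S /\ y \in S.

Definition root_closed (A : idomainType) (S : {pred A}) : Prop :=
  forall (x : A) (n : nat), (1 <= n)%N -> x ^+ n \in S -> x \in S.

From HB Require Import structures.
From mathcomp Require Import all_boot all_order all_algebra.
From mathcomp Require Import ring.
From Stdlib Require Import Classical.
Set Implicit Arguments. Unset Strict Implicit. Unset Printing Implicit Defensive.
Import GRing.Theory.
Local Open Scope ring_scope.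

(* Write x = b^2 c with c square-free. For odd n = 2m + 1, x^n = (x^m b)^2 c, so
   square-factorial closedness puts c in R; then (b^n)^2 = x^n / c^n lies in R_0 ∩ A = R,
   hence b^n ∈ R. Unless b is a unit (and so in R), b has fewer irreducible factors than x,
   so by induction b ∈ R and x = b^2 c ∈ R. Even exponents are halved: (x^m)^2 ∈ R gives
   x^m ∈ R, since 1 is square-free. *)

Section IrreducibleFactorization.

Variable A : idomainType.
Implicit Types a b c u : A.
Hypothesis A_UFD : UFD A.

Definition irr_factorization a (k : nat) : Prop :=
  exists u (s : seq A), [/\ u \is a GRing.unit, forall p, p \in s -> irreducible_elt p,
    size s = k & a = u * \prod_(p <- s) p].

Lemma irreducible_elt_unitMl u q :
  u \is a GRing.unit -> irreducible_elt q -> irreducible_elt (u * q).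
Proof.
move=> Uu [q0 qN q_irr]; split.
- by rewrite mulf_neq0 //; apply: contraTneq Uu => ->; rewrite unitr0.
- by rewrite unitrM negb_and qN orbT.
- move=> b c qE; have /q_irr[Ub | Uc] : q = (u^-1 * b) * c.
    by rewrite -mulrA -qE mulKr.
  + by left; move: Ub; rewrite unitrM unitrV Uu.
  + by right.
Qed.

Lemma irr_prod_nonunit p (s : seq A) :
  (forall q, q \in p :: s -> irreducible_elt q) -> \prod_(q <- p :: s) q \isn't a GRing.unit.
Proof.
by move=> s_irr; case: (s_irr p (mem_head _ _)) => _ pN _; rewrite big_cons unitrM negb_and pN.
Qed.

Lemma irr_factorization_exists a : a != 0 -> exists k, irr_factorization a k.
Proof.
have [atomic _] := A_UFD; move=> a0; have [Ua | aN] := boolP (a \is a GRing.unit).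
  by exists 0%N, a, [::]; rewrite big_nil mulr1.
have [s [s_irr ->]] := atomic a a0 aN.
by exists (size s), 1, s; rewrite unitr1 mul1r.
Qed.

Lemma irr_factorizationM a b i j :
  irr_factorization a i -> irr_factorization b j -> irr_factorization (a * b) (i + j).
Proof.
move=> [u [s [Uu s_irr <- ->]]] [v [t [Uv t_irr <- ->]]].
exists (u * v), (s ++ t); split.
- by rewrite unitrM Uu Uv.
- by move=> p; rewrite mem_cat => /orP[/s_irr | /t_irr].
- by rewrite size_cat.
- by rewrite big_cat /=; ring.
Qed.

Lemma irr_factorization_neq0 a k : irr_factorization a k -> a != 0.
Proof.
move=> [u [s [Uu s_irr _ ->]]]; rewrite mulf_neq0 //.
  by apply: contraTneq Uu => ->; rewrite unitr0.
by rewrite prodf_seq_neq0; apply/allP => p /s_irr[].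
Qed.

Lemma irr_factorization0 a : irr_factorization a 0 -> a \is a GRing.unit.
Proof. by move=> [u [[|p s] [Uu _ // _ ->]]]; rewrite big_nil mulr1. Qed.

Lemma irr_factorizationS a k : irr_factorization a k.+1 ->
  exists2 s : seq A, forall p, p \in s -> irreducible_elt p & size s = k.+1 /\ a = \prod_(p <- s) p.
Proof.
move=> [u [[|p s] [Uu s_irr // sz ->]]].
exists (u * p :: s); last by split=> //; rewrite !big_cons mulrA.
move=> q; rewrite in_cons => /orP[/eqP -> | qs].
  by apply: irreducible_elt_unitMl => //; apply: s_irr; rewrite mem_head.
by apply: s_irr; rewrite in_cons qs orbT.
Qed.

Lemma irr_factorizationS_nonunit a k : irr_factorization a k.+1 -> a \isn't a GRing.unit.
Proof. by move=> /irr_factorizationS[[|p s] s_irr [//= _ ->]]; apply: irr_prod_nonunit. Qed.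

Lemma irr_factorization_uniq a i j :
  irr_factorization a i -> irr_factorization a j -> i = j.
Proof.
have [_ uniq_fact] := A_UFD.
case: i => [|i] /[swap]; case: j => [|j] //.
- by move=> /irr_factorizationS_nonunit/negP aN /irr_factorization0.
- by move=> /irr_factorization0 Ua /irr_factorizationS_nonunit/negP.
move=> /irr_factorizationS[t t_irr [tsz ->]] /irr_factorizationS[s s_irr [ssz sE]].
have [s' [s_s' ts' _]] := uniq_fact t s t_irr s_irr sE.
by rewrite -ssz -tsz ts' (perm_size s_s').
Qed.

Lemma irr_factorizationMl_lt b c k :
  irr_factorization (b * c) k -> c \isn't a GRing.unit ->
  exists2 i, irr_factorization b i & (i < k)%N.
Proof.
move=> bc_k cN; have /[!mulf_eq0] /norP[b0 c0] := irr_factorization_neq0 bc_k.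
have [[i b_i] [j c_j]] := (irr_factorization_exists b0, irr_factorization_exists c0).
exists i => //; rewrite (irr_factorization_uniq bc_k (irr_factorizationM b_i c_j)).
by case: j c_j => [/irr_factorization0 Uc | j _]; [rewrite Uc in cN | rewrite addnS ltnS leq_addr].
Qed.

Lemma square_free1 : square_free (1 : A).
Proof.
move=> [b [c [E bN]]]; have : b ^+ 2 * c \is a GRing.unit by rewrite -E unitr1.
by rewrite unitrM unitrX_pos // (negbTE bN).
Qed.

Lemma square_free_decomposition a : a != 0 ->
  exists b c, a = b ^+ 2 * c /\ square_free c.
Proof.
move=> /irr_factorization_exists[k]; elim/ltn_ind: k a => k IHk a a_k.
have [[b [c [aE bN]]] | sqf_a] := classic (exists b c, a = b ^+ 2 * c /\ b \isn't a GRing.unit);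
  last by exists 1, a; rewrite expr1n mul1r.
have cb_k : irr_factorization (c * b ^+ 2) k by rewrite mulrC -aE.
have [|i c_i ltik] := irr_factorizationMl_lt cb_k; first by rewrite unitrX_pos.
have [b' [c' [cE sqf_c']]] := IHk i ltik c c_i.
by exists (b * b'), c'; rewrite aE cE; split=> //; ring.
Qed.

End IrreducibleFactorization.

Section RootClosed.

Variables (A : idomainType) (S : {pred A}).
Hypotheses (A_UFD : UFD A) (S_subring : GRing.subring_closed S).
HB.instance Definition _ := GRing.isSubringClosed.Build A S S_subring.

Hypothesis units_mem : forall u, u \is a GRing.unit -> u \in S.
Hypothesis frac_mem : forall a r s, r \in S -> s \in S -> s != 0 -> a * s = r -> a \in S.
Hypothesis S_sq_fact_closed : sq_fact_closed S.

Lemma sqr_closed x : x ^+ 2 \in S -> x \in S.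
Proof.
have [-> _ | x0 x2S] := eqVneq x 0; first exact: rpred0.
have x2S' : x ^+ 2 * 1 \in S by rewrite mulr1.
by have [] := S_sq_fact_closed (@square_free1 A) x2S'; rewrite ?mulr1 ?expf_neq0.
Qed.

Lemma mem_odd_power_sq_fact n b c : odd n -> square_free c -> b ^+ 2 * c != 0 ->
  (b ^+ 2 * c) ^+ n \in S -> c \in S /\ b ^+ n \in S.
Proof.
move=> odd_n sqf_c x0 xnS; set x := b ^+ 2 * c in x0 xnS.
have xnE : x ^+ n = (x ^+ n./2 * b) ^+ 2 * c.
  have nE : n = (n./2 * 2).+1 by rewrite -[in LHS](odd_double_half n) odd_n muln2.
  by rewrite [in LHS]nE exprS exprM /x; ring.
have xn0 : x ^+ n != 0 by rewrite expf_neq0.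
have [_ cS] : x ^+ n./2 * b \in S /\ c \in S by apply: S_sq_fact_closed; rewrite // -xnE.
split=> //; apply: sqr_closed; apply: (frac_mem xnS (rpredX n cS)).
  by apply: expf_neq0; apply: contraNneq x0 => c0; rewrite /x c0 mulr0.
by rewrite /x exprMn -!exprM mulnC.
Qed.

Lemma mem_of_odd_power x n : odd n -> x ^+ n \in S -> x \in S.
Proof.
move=> odd_n; have [-> _ | /(irr_factorization_exists A_UFD)[k x_k]] := eqVneq x 0.
  exact: rpred0.
elim/ltn_ind: k x x_k => k IHk x x_k xnS.
have x0 := irr_factorization_neq0 x_k.
have [b [c [xE sqf_c]]] := square_free_decomposition A_UFD x0.
have [cS bnS] : c \in S /\ b ^+ n \in S by apply: mem_odd_power_sq_fact; rewrite // -xE.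
rewrite xE rpredM ?rpredX //; have [/units_mem // | bN] := boolP (b \is a GRing.unit).
have bbc_k : irr_factorization (b * (b * c)) k by rewrite mulrA -expr2 -xE.
have [|i b_i ltik] := irr_factorizationMl_lt A_UFD bbc_k; first by rewrite unitrM negb_and bN.
exact: IHk b_i bnS.
Qed.

Lemma root_closed_of_sq_fact_closed : root_closed S.
Proof.
move=> x n; elim/ltn_ind: n => n IHn n_gt0 xnS.
have [odd_n | even_n] := boolP (odd n); first exact: mem_of_odd_power odd_n xnS.
have nE : n = (n./2 * 2)%N by rewrite -[in LHS](odd_double_half n) (negbTE even_n) muln2.
move: n_gt0 xnS; rewrite nE; set m := n./2 => m2_gt0 xmS.
have m_gt0 : (0 < m)%N by rewrite muln_gt0 andbT in m2_gt0.
apply: (IHn m _ m_gt0); first by rewrite nE ltn_Pmulr.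
by apply: sqr_closed; rewrite -exprM.
Qed.

End RootClosed.

Theorem theorem3p5 (A : idomainType) (S : {pred A}) :
  UFD A ->
  GRing.subring_closed S ->
  (* the group of units of R equals the group of units of A *)
  (forall x : A, (x \in S /\ exists2 y : A, y \in S & x * y = 1) <-> x \is a GRing.unit) ->
  (* R_0 ∩ A = R, where R_0 = {r/s : r, s ∈ R, s ≠ 0} inside Frac(A) *)
  (forall a : A, (a \in S <->
     exists r s : A, [/\ r \in S, s \in S, s != 0 & a * s = r])) ->
  sq_fact_closed S ->
  root_closed S.
Proof.
move=> A_UFD S_subring units_eq frac_eq.
apply: root_closed_of_sq_fact_closed => //.
- by move=> u /(units_eq u)[].
- by move=> a r s rS sS s0 asE; apply/(frac_eq a); exists r, s.
Qed.
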